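(* Let $G=(V,E)$ be a simple 2-vertex-connected graph without irrelevant edges, let $\{u,v\}$ be a 2-vertex-cut of $G$, let $(V_1,V_2)$ with $V_1\ne\emptyset\ne V_2$ be a partition of $V\setminus\{u,v\}$ with no edges of $G$ between $V_1$ and $V_2$, and let $H\subseteq E$ be such that $(V,H)$ is a 2-edge-connected spanning subgraph of $G$. For $i\in\{1,2\}$ let $G_i=G[V_i\cup\{u,v\}]$ and $H_i=E(G_i)\cap H$ (viewed as a subgraph on node set $V_i\cup\{u,v\}$). Then: (1) each of $H_1,H_2$ is of type A, B or C with respect to $\{u,v\}$, and if one of them is of type C then the other is of type A; (2) if $H_i$ is of type C then there is an edge $f\in E(G_i)$ such that $H_i\cup\{f\}$ is of type B; consequently there exists a 2-edge-connected spanning subgraph $H'$ of $G$ such that $H'\cap E(G_i)$ is of type A or B.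
   Context: A graph is 2-edge-connected (2EC) if connected and it stays connected after removal of any one edge; 2-vertex-connected if it has at least 3 nodes, is connected and has no 1-vertex-cut. An edge $xy$ is irrelevant if $\{x,y\}$ is a 2-vertex-cut. For a graph $K$ and nodes $u,v\in V(K)$: the 2EC components of $K$ are its maximal 2EC subgraphs, where a single node not contained in any 2EC subgraph with at least 2 nodes counts as its own (degenerate) 2EC component; let $K'$ be obtained by contracting each 2EC component into a super-node, and let $C(u),C(v)$ be the super-nodes containing $u,v$. $K$ is of type A w.r.t. $\{u,v\}$ if $K'$ is a single super-node $C(u)=C(v)$; of type B if $K'$ is a $C(u)$-$C(v)$ path with at least one edge; of type C if $K'$ consists of exactly two isolated super-nodes $C(u)$ and $C(v)$. *)

(* Finite simple graphs on a finType T, given by a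
   symmetric irreflexive relation g : rel T; the vertex set V is all of T.
   A (sub)graph K is given by a node set S : {set T} and a symmetric edge
   relation h : rel T; only edges with both ends in S count. *)
From mathcomp Require Import all_boot.
Set Implicit Arguments.
Unset Strict Implicit.
Unset Printing Implicit Defensive.

Section Graphs.
Variable T : finType.

Definition simple_graph (g : rel T) : Prop := symmetric g /\ irreflexive g.

Definition restrict (S : {set T}) (h : rel T) : rel T :=
  [rel a b | [&& a \in S, b \in S & h a b]].

Definition connectedb (S : {set T}) (h : rel T) : bool :=
  [forall x in S, forall y in S, connect (restrict S h) x y].

Definition delEdge (h : rel T) (a b : T) : rel T :=
  [rel x y | h x y && ~~ (((x == a) && (y == b)) || ((x == b) && (y == a)))].

Definition addEdge (h : rel T) (a b : T) : rel T :=
  [rel x y | [|| h x y, (x == a) && (y == b) | (x == b) && (y == a)]].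

Definition twoEC (S : {set T}) (h : rel T) : bool :=
  connectedb S h &&
  [forall a in S, forall b in S, h a b ==> connectedb S (delEdge h a b)].

Definition two_vertex_connected (g : rel T) : Prop :=
  2 < #|T| /\ connectedb setT g /\ forall x : T, connectedb (setT :\ x) g.

Definition two_vertex_cut (g : rel T) (u v : T) : Prop :=
  u != v /\ ~~ connectedb (setT :\: [set u; v]) g.

(* edge xy is irrelevant iff {x,y} is a 2-vertex-cut *)
Definition no_irrelevant_edges (g : rel T) : Prop :=
  forall x y, g x y -> ~ two_vertex_cut g x y.

Definition spanning_2EC_subgraph (g h : rel T) : Prop :=
  symmetric h /\ (forall x y, h x y -> g x y) /\ twoEC setT h.

(* A maximal 2EC subgraph is induced on its node set, so it is
   determined by a node set C maximal w.r.t. inclusion among those inducing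
   a 2EC subgraph; single nodes are (degenerate) 2EC graphs. *)
Definition is2ECcomp (S : {set T}) (h : rel T) (C : {set T}) : bool :=
  [&& C \subset S, C != set0, twoEC C h &
      [forall C' : {set T}, ((C \proper C') && (C' \subset S)) ==> ~~ twoEC C' h]].

(* super-nodes of the contracted graph K' *)
Definition comps (S : {set T}) (h : rel T) : {set {set T}} :=
  [set C | is2ECcomp S h C].

(* number of edges of K joining the (disjoint) node sets C and D, i.e.
   number of parallel edges between super-nodes C and D in K' *)
Definition mult (S : {set T}) (h : rel T) (C D : {set T}) : nat :=
  #|[set p : T * T | [&& p.1 \in C, p.2 \in D, p.1 \in S, p.2 \in S & h p.1 p.2]]|.

Definition typeA (S : {set T}) (h : rel T) (u v : T) : Prop :=
  exists C, comps S h = [set C] /\ u \in C /\ v \in C.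

(* type B: K' is a C(u)-C(v) path with at least one edge *)
Definition typeB (S : {set T}) (h : rel T) (u v : T) : Prop :=
  exists p : seq {set T},
    [/\ uniq p, 2 <= size p, comps S h =i p &
        u \in nth set0 p 0 /\ v \in last set0 p] /\
        (
        forall i j, i < j -> j < size p ->
          mult S h (nth set0 p i) (nth set0 p j) = (j == i.+1 : nat)).

Definition typeC (S : {set T}) (h : rel T) (u v : T) : Prop :=
  exists Cu Cv, [/\ Cu != Cv, comps S h = [set Cu; Cv],
                   u \in Cu, v \in Cv & mult S h Cu Cv = 0].

Definition typeABC (S : {set T}) (h : rel T) (u v : T) : Prop :=
  typeA S h u v \/ typeB S h u v \/ typeC S h u v.

Definition part2 (g hH : rel T) (Si : {set T}) (u v : T) : Prop :=
  typeC Si hH u v ->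
  (exists a b, [/\ g a b, a \in Si, b \in Si & typeB Si (addEdge hH a b) u v])
  /\ (exists hH' : rel T, spanning_2EC_subgraph g hH' /\
                          (typeA Si hH' u v \/ typeB Si hH' u v)).

End Graphs.

From mathcomp Require Import all_boot zify.

(* Since H is 2-edge-connected and G_i meets the rest of G only in u and v,
   after deleting any single edge of H_i every node of G_i still reaches u or
   v inside H_i.  Every graph with this two-terminal property is of type A, B
   or C: if u and v are disconnected, their components are the two super-nodes
   (type C); if no single edge separates u from v, the graph is 2EC (type A);
   otherwise some edge ab is the only edge leaving the u-side U of the cut,
   U and its complement are two-terminal with respect to {u, a} and {b, v},
   and by induction their super-node paths concatenate through ab (type B).
   If H_1 is of type C, then for every edge cd the u-v path of H - cd can be
   rerouted inside H_2, so H_2 is 2EC.  Finally, G - u and G - v are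
   connected, so G has an edge joining the two super-nodes of a side of type C,
   and adding it produces type B. *)

Set Implicit Arguments.
Unset Strict Implicit.
Unset Printing Implicit Defensive.

Section Graphs.
Variable T : finType.
Implicit Types (S U W X Z A C D : {set T}) (h r : rel T).

(** * Connectivity inside a node set *)

Lemma exit_edge r X x y :
  connect r x y -> x \in X -> y \notin X ->
  exists c d, [/\ c \in X, d \notin X & r c d].
Proof.
move/connectP=> [p + ->] {y}; elim: p x => [|z p IH] x /=; first by move=> _ ->.
case/andP=> rxz pz xX; case zX: (z \in X); first exact: IH.
by move=> _; exists x, z; rewrite zX.
Qed.

Lemma connect_restrict_sub S S' r r' x y : S \subset S' -> subrel r r' ->
  connect (restrict S r) x y -> connect (restrict S' r') x y.
Proof.
move=> /subsetP sSS' rr'; apply: connect_sub => a b /and3P[aS bS rab].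
by apply: connect1; rewrite /restrict /= !sSS' // rr'.
Qed.

Lemma connect_restrict_in S r x y : connect (restrict S r) x y -> x \in S -> y \in S.
Proof.
move=> cxy xS; apply: contraT => yS.
by have [c [d [_ dS /and3P[_ dS' _]]]] := exit_edge cxy xS yS; rewrite dS' in dS.
Qed.

Lemma restrict_sym S h : symmetric h -> symmetric (restrict S h).
Proof. by move=> sh x y; rewrite /restrict /= sh andbCA. Qed.

Lemma delEdge_sym h a b : symmetric h -> symmetric (delEdge h a b).
Proof.
move=> sh x y; rewrite /delEdge /= sh; congr (_ && ~~ _).
by case: (x == a); case: (y == b); case: (x == b); case: (y == a).
Qed.

Lemma addEdge_sym h a b : symmetric h -> symmetric (addEdge h a b).
Proof.
move=> sh x y; rewrite /addEdge /= sh; congr (_ || _).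
by case: (x == a); case: (y == b); case: (x == b); case: (y == a).
Qed.

Lemma delEdge_sub h a b : subrel (delEdge h a b) h.
Proof. by move=> x y /andP[]. Qed.

Lemma addEdge_sub h a b : subrel h (addEdge h a b).
Proof. by move=> x y hxy; rewrite /addEdge /= hxy. Qed.

Lemma connectedbP S r :
  reflect {in S &, forall x y, connect (restrict S r) x y} (connectedb S r).
Proof.
apply: (iffP forallP) => [H x y xS yS | H x].
  by move/implyP: (H x) => /(_ xS)/forallP/(_ y)/implyP; apply.
by apply/implyP => xS; apply/forallP => y; apply/implyP; apply: H.
Qed.

Lemma connectedb_connect S r x y :
  connectedb S r -> x \in S -> y \in S -> connect (restrict S r) x y.
Proof. by move/connectedbP; apply. Qed.

Lemma connectedb_delEdge S h c d : symmetric h -> twoEC S h ->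
  connectedb S (delEdge h c d).
Proof.
move=> sh /andP[cS /forallP allE].
have [/and3P[cS' dS' hcd] | ncd] := boolP [&& c \in S, d \in S & h c d].
  move/implyP: (allE c) => /(_ cS')/forallP/(_ d)/implyP/(_ dS').
  by move/implyP/(_ hcd).
have E : restrict S (delEdge h c d) =2 restrict S h.
  move=> x y; rewrite /restrict /delEdge /=.
  case xS: (x \in S); case yS: (y \in S); case hxy: (h x y) => //=.
  apply/negP => /orP[]/andP[/eqP ex /eqP ey]; move: ncd; rewrite -ex -ey xS yS ?hxy //.
  by rewrite sh hxy.
by apply/connectedbP => x y xS yS; rewrite (eq_connect E) connectedb_connect.
Qed.

Lemma twoEC_of_connectedb_delEdge S h :
  (forall c d, connectedb S (delEdge h c d)) -> twoEC S h.
Proof.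
move=> H; apply/andP; split.
  apply/connectedbP => x y xS yS.
  apply: connect_restrict_sub (subxx S) (@delEdge_sub h x x) _.
  exact: connectedb_connect (H x x) xS yS.
apply/forallP => a; apply/implyP => _; apply/forallP => b; apply/implyP => _.
by apply/implyP => _; apply: H.
Qed.

Lemma twoEC_sub C h h' : symmetric h -> subrel h h' -> twoEC C h -> twoEC C h'.
Proof.
move=> sh hh' tC; apply: twoEC_of_connectedb_delEdge => c d.
apply/connectedbP => x y xC yC.
have hh'cd : subrel (delEdge h c d) (delEdge h' c d).
  by move=> p q /andP[hpq ncd]; rewrite /delEdge /= hh'.
apply: connect_restrict_sub (subxx C) hh'cd _.
exact: connectedb_connect (connectedb_delEdge c d sh tC) xC yC.
Qed.

Lemma twoEC_setU h A B x : symmetric h -> twoEC A h -> twoEC B h ->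
  x \in A -> x \in B -> twoEC (A :|: B) h.
Proof.
move=> sh tA tB xA xB; apply: twoEC_of_connectedb_delEdge => c d.
have to_x y : y \in A :|: B -> connect (restrict (A :|: B) (delEdge h c d)) y x.
  case/setUP => yin; apply: connect_restrict_sub (fun _ _ => id) _.
  - exact: subsetUl.
  - exact: connectedb_connect (connectedb_delEdge c d sh tA) yin xA.
  - exact: subsetUr.
  - exact: connectedb_connect (connectedb_delEdge c d sh tB) yin xB.
apply/connectedbP => y z yAB zAB; apply: connect_trans (to_x y yAB) _.
by rewrite (sym_connect_sym (restrict_sym _ (delEdge_sym c d sh))) to_x.
Qed.

Definition reach S h x := [set y in S | connect (restrict S h) x y].

Lemma reach_refl S h x : x \in S -> x \in reach S h x.
Proof. by move=> xS; rewrite inE xS connect0. Qed.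

Lemma reach_sub S h x : reach S h x \subset S.
Proof. by apply/subsetP => y /setIdP[]. Qed.

Lemma reach_closed S h x y z :
  y \in reach S h x -> z \in S -> h y z -> z \in reach S h x.
Proof.
case/setIdP=> yS cxy zS hyz; rewrite inE zS.
by apply: connect_trans cxy (connect1 _); rewrite /restrict /= yS zS hyz.
Qed.

Lemma connect_restrict_closed S W r x y :
  (forall y z, y \in W -> z \in S -> r y z -> z \in W) -> x \in W ->
  connect (restrict S r) x y -> connect (restrict W r) x y.
Proof.
move=> clW xW /connectP[p + ->]; elim: p x xW => [|z p IH] x xW /=.
  by move=> _; apply: connect0.
case/andP=> /and3P[_ zS rxz] pz; have zW := clW x z xW zS rxz.
by apply: connect_trans (IH z zW pz); apply: connect1; rewrite /restrict /= xW zW.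
Qed.

Definition exits_through r W p1 p2 :=
  forall y z, y \in W -> z \notin W -> r y z -> (y == p1) || (y == p2).

Lemma exits_through_sub S W r r' p1 p2 : subrel r r' ->
  exits_through r' W p1 p2 -> exits_through (restrict S r) W p1 p2.
Proof. by move=> rr' ex y z yW zNW /and3P[_ _ /rr']; apply: ex. Qed.

Lemma connect_exits_through S W r p1 p2 x t :
  exits_through (restrict S r) W p1 p2 -> x \in W -> connect (restrict S r) x t ->
  [|| connect (restrict W r) x t, connect (restrict W r) x p1
    | connect (restrict W r) x p2].
Proof.
move=> exW xW cxt; apply: contraT; rewrite !negb_or => /and3P[nt n1 n2].
have tZ : t \notin reach W r x by rewrite inE negb_and nt orbT.
have [y [z [yZ zZ Sryz]]] := exit_edge cxt (reach_refl r xW) tZ.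
have [yW cxy] := setIdP yZ.
have [zW | zW] := boolP (z \in W).
  by case/and3P: Sryz => _ _ ryz; rewrite (reach_closed yZ zW ryz) in zZ.
by case/orP: (exW y z yW zW Sryz) => /eqP ey;
  [move: n1 | move: n2]; rewrite -ey cxy.
Qed.

(** * 2-edge-connected components *)

Lemma compsP S h C :
  reflect [/\ C \subset S, C != set0, twoEC C h &
            forall C', C \proper C' -> C' \subset S -> ~~ twoEC C' h]
          (C \in comps S h).
Proof.
rewrite inE; apply: (iffP and4P) => [[sC nC tC /forallP maxC] | [sC nC tC maxC]].
  by split=> // C' pC' sC'; move/implyP: (maxC C'); apply; rewrite pC'.
by split=> //; apply/forallP => C'; apply/implyP => /andP[]; apply: maxC.
Qed.

Lemma comps_sub S h C : C \in comps S h -> C \subset S.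
Proof. by case/compsP. Qed.

Lemma comps_twoEC S h C : C \in comps S h -> twoEC C h.
Proof. by case/compsP. Qed.

Lemma comps_eq S h C D x : symmetric h -> C \in comps S h -> D \in comps S h ->
  x \in C -> x \in D -> C = D.
Proof.
move=> sh /compsP[sC _ tC maxC] /compsP[sD _ tD maxD] xC xD.
have tCD := twoEC_setU sh tC tD xC xD.
have sCD : C :|: D \subset S by rewrite subUset sC sD.
have DC : D \subset C.
  have : ~~ (C \proper C :|: D) by apply: contraL tCD => /maxC; apply.
  by rewrite properE subsetUl negbK subUset subxx.
have CD : C \subset D.
  have : ~~ (D \proper C :|: D) by apply: contraL tCD => /maxD; apply.
  by rewrite properE subsetUr negbK subUset subxx andbT.
by apply/eqP; rewrite eqEsubset CD DC.
Qed.

Lemma comps_cover S h x : x \in S -> exists2 C, C \in comps S h & x \in C.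
Proof.
move=> xS; pose P C := [&& x \in C, C \subset S & twoEC C h].
have Px : P [set x].
  rewrite /P set11 sub1set xS; apply: twoEC_of_connectedb_delEdge => c d.
  by apply/connectedbP => y z /set1P-> /set1P->; apply: connect0.
have [C /and3P[xC sC tC] maxC] := arg_maxnP (fun C => #|C|) Px.
exists C => //; apply/compsP; split=> //; first by apply/set0Pn; exists x.
move=> C' pC' sC'; apply: contraTN (proper_card pC') => tC'.
by rewrite -leqNgt; apply: maxC; rewrite /P sC' tC' (subsetP (proper_sub pC')).
Qed.

Lemma comps_of_twoEC S h : twoEC S h -> S != set0 -> comps S h = [set S].
Proof.
move=> tS nS; apply/setP => C; rewrite in_set1.
apply/compsP/eqP => [[sC nC tC maxC] | ->]; last first.
  by split=> // C' pC' sC'; rewrite properE sC' andbF in pC'.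
apply/eqP; rewrite eqEsubset sC; apply: contraT => nSC.
by move: (maxC S); rewrite properE sC nSC tS => /(_ isT (subxx S)).
Qed.

Lemma comps_closed S h Z : Z \subset S -> Z != set0 -> twoEC Z h ->
  (forall y z, y \in Z -> z \in S -> h y z -> z \in Z) -> Z \in comps S h.
Proof.
move=> sZ /set0Pn[z zZ] tZ clZ; apply/compsP; split=> //; first by apply/set0Pn; exists z.
move=> C' /properP[sZC' [w wC' wZ]] sC'; apply/negP => /andP[cC' _].
have czw := connectedb_connect cC' (subsetP sZC' z zZ) wC'.
have [p [q [pZ qZ /and3P[_ qC' hpq]]]] := exit_edge czw zZ wZ.
by rewrite (clZ p q pZ (subsetP sC' q qC') hpq) in qZ.
Qed.

(** * Two-terminal graphs are of type A, B or C *)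

Definition two_terminal S h u v := forall c d x, x \in S ->
  connect (restrict S (delEdge h c d)) x u || connect (restrict S (delEdge h c d)) x v.

Lemma twoEC_of_two_terminal S h u v : symmetric h -> two_terminal S h u v ->
  (forall c d, connect (restrict S (delEdge h c d)) u v) -> twoEC S h.
Proof.
move=> sh tt cuv; apply: twoEC_of_connectedb_delEdge => c d.
have symD := restrict_sym S (delEdge_sym c d sh).
have to_u z : z \in S -> connect (restrict S (delEdge h c d)) z u.
  move=> zS; case/orP: (tt c d z zS) => // czv.
  by apply: connect_trans czv _; rewrite (sym_connect_sym symD).
apply/connectedbP => x y xS yS; apply: connect_trans (to_u x xS) _.
by rewrite (sym_connect_sym symD) to_u.
Qed.

Lemma reach_comps S h u v : symmetric h -> u \in S -> two_terminal S h u v ->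
  ~~ connect (restrict S h) u v -> reach S h u \in comps S h.
Proof.
move=> sh uS tt nuv; have uZ := reach_refl h uS.
apply: comps_closed => [||| y z]; last exact: reach_closed.
- exact: reach_sub.
- by apply/set0Pn; exists u.
apply: twoEC_of_connectedb_delEdge => c d.
have to_u z : z \in reach S h u -> connect (restrict (reach S h u) (delEdge h c d)) z u.
  move=> zZ; have [zS cuz] := setIdP zZ.
  have clZ y' z' :
      y' \in reach S h u -> z' \in S -> delEdge h c d y' z' -> z' \in reach S h u.
    by move=> y'Z z'S /delEdge_sub; apply: reach_closed.
  apply: (connect_restrict_closed clZ zZ).
  case/orP: (tt c d z zS) => // czv; case/negP: nuv.
  exact: connect_trans cuz (connect_restrict_sub (subxx S) (@delEdge_sub h c d) czv).
have symD := restrict_sym (reach S h u) (delEdge_sym c d sh).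
apply/connectedbP => x y xZ yZ; apply: connect_trans (to_u x xZ) _.
by rewrite (sym_connect_sym symD) to_u.
Qed.

Lemma reach_sym S h x y : symmetric h -> x \in S -> y \in S ->
  (y \in reach S h x) = (x \in reach S h y).
Proof. by move=> sh xS yS; rewrite !inE xS yS (sym_connect_sym (restrict_sym S sh)). Qed.

Lemma typeC_of_disconnected S h u v : symmetric h -> u \in S -> v \in S ->
  two_terminal S h u v -> ~~ connect (restrict S h) u v -> typeC S h u v.
Proof.
move=> sh uS vS tt nuv.
have nvu : ~~ connect (restrict S h) v u by rewrite (sym_connect_sym (restrict_sym S sh)).
have tt' : two_terminal S h v u by move=> c d x xS; rewrite orbC tt.
have cu := reach_comps sh uS tt nuv; have cv := reach_comps sh vS tt' nvu.
have reach_uv x : x \in reach S h u -> x \in reach S h v -> False.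
  case/setIdP=> _ cux /setIdP[_ cvx]; case/negP: nuv; apply: connect_trans cux _.
  by rewrite (sym_connect_sym (restrict_sym S sh)).
exists (reach S h u), (reach S h v); split; rewrite ?reach_refl //.
- by apply/eqP => E; apply: (reach_uv u (reach_refl h uS)); rewrite -E reach_refl.
- apply/setP => C; rewrite in_set2; apply/idP/idP => [cC | /orP[]/eqP-> //].
  case/compsP: (cC) => sC /set0Pn[x xC] _ _; have xS := subsetP sC x xC.
  have /orP[] := tt x x x xS => /(connect_restrict_sub (subxx S) (@delEdge_sub h x x)) cx.
    by rewrite (comps_eq sh cC cu xC) ?eqxx // reach_sym // inE uS.
  by rewrite (comps_eq sh cC cv xC) ?eqxx ?orbT // reach_sym // inE vS.
- apply/eqP; rewrite cards_eq0; apply: contraT => /set0Pn[[y z]].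
  rewrite inE /= => /and5P[yu zv yS zS hyz].
  by case: (reach_uv z (reach_closed yu zS hyz) zv).
Qed.

Lemma typeC_split S h u v : symmetric h -> typeC S h u v ->
  exists2 C, [/\ C \in comps S h, S :\: C \in comps S h, u \in C & v \in S :\: C] &
    forall y z, y \in C -> z \in S -> h y z -> z \in C.
Proof.
move=> sh [Cu [Cv [neq E uCu vCv m0]]].
have cu : Cu \in comps S h by rewrite E set21.
have cv : Cv \in comps S h by rewrite E set22.
have disj x : x \in Cu -> x \notin Cv.
  by move=> xCu; apply: contra neq => xCv; rewrite (comps_eq sh cu cv xCu xCv).
have SCu : S :\: Cu = Cv.
  apply/setP => x; rewrite inE; apply/andP/idP => [[xNCu xS] | xCv].
    have [C] := comps_cover h xS; rewrite E in_set2.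
    by case/orP => /eqP-> // xCu; rewrite xCu in xNCu.
  split; last exact: subsetP (comps_sub cv) x xCv.
  by apply: contraL xCv; apply: disj.
exists Cu; first by rewrite SCu.
move=> y z yCu zS hyz; apply: contraT => zNCu.
have yS := subsetP (comps_sub cu) y yCu.
have zCv : z \in Cv by rewrite -SCu inE zNCu.
move/eqP: m0; rewrite cards_eq0 => /eqP/setP/(_ (y, z)).
by rewrite !inE /= yCu zCv yS zS hyz.
Qed.

Lemma typeC_disconnected S h u v : symmetric h -> typeC S h u v ->
  ~~ connect (restrict S h) u v.
Proof.
move=> sh /(typeC_split sh)[C [_ _ uC /setDP[_ vNC]] clC]; apply/negP => cuv.
have [y [z [yC zNC /and3P[_ zS hyz]]]] := exit_edge cuv uC vNC.
by rewrite (clC y z yC zS hyz) in zNC.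
Qed.

Definition mult_chain S h (p : seq {set T}) := forall i j, i < j -> j < size p ->
  mult S h (nth set0 p i) (nth set0 p j) = (j == i.+1).

Definition comp_path S h u v (p : seq {set T}) :=
  [/\ uniq p, 0 < size p, comps S h =i p, u \in nth set0 p 0 & v \in last set0 p]
  /\ mult_chain S h p.

Lemma comp_path1 S h u v C : comps S h = [set C] -> u \in C -> v \in C ->
  comp_path S h u v [:: C].
Proof. by move=> E uC vC; split=> [|i [|j]] //; split=> // D; rewrite E !inE. Qed.

Lemma comp_path_of_typeABC S h u v : symmetric h -> connect (restrict S h) u v ->
  typeABC S h u v -> exists p, comp_path S h u v p.
Proof.
move=> sh cuv [[C [E [uC vC]]] | [[p [[up szp E [up0 vp]] mp]] | /(typeC_disconnected sh)]].
- by exists [:: C]; apply: comp_path1.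
- by exists p; split=> //; split=> //; apply: leq_trans szp.
- by rewrite cuv.
Qed.

Lemma mult_sub S S' h C D : C \subset S -> D \subset S -> S \subset S' ->
  mult S' h C D = mult S h C D.
Proof.
move=> /subsetP sC /subsetP sD /subsetP sS; apply: eq_card => -[x y]; rewrite !inE /=.
have [/sC xS|//] := boolP (x \in C); have [/sD yS|//] := boolP (y \in D).
by rewrite xS yS !sS.
Qed.

Lemma mult_chain_sub S S' h p : {subset p <= comps S h} -> S \subset S' ->
  mult_chain S h p -> mult_chain S' h p.
Proof.
move=> pS sS mp i j ij jp; have ip := ltn_trans ij jp.
by rewrite -mp // (@mult_sub S) // (@comps_sub S h) // pS // mem_nth.
Qed.

Lemma mult_chain_cat S h p q : mult_chain S h p -> mult_chain S h q ->
  (forall i k, i < size p -> k < size q ->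
     mult S h (nth set0 p i) (nth set0 q k) = (i == (size p).-1) && (k == 0)) ->
  mult_chain S h (p ++ q).
Proof.
move=> mp mq mpq i j ij; rewrite size_cat !nth_cat => jpq.
have [jp | pj] := ltnP j (size p); first by rewrite (ltn_trans ij jp) mp.
have [ip | pi] := ltnP i (size p).
  rewrite mpq //; last by lia.
  by congr nat_of_bool; apply/andP/eqP => [[/eqP ? /eqP ?] | ?]; last split; apply/eqP; lia.
rewrite mq; last by lia.
  by congr nat_of_bool; apply/eqP/eqP; lia.
by lia.
Qed.

Lemma nth_comps_inj S h p i k x : symmetric h -> uniq p -> {subset p <= comps S h} ->
  i < size p -> k < size p -> x \in nth set0 p i -> x \in nth set0 p k -> i = k.
Proof.
move=> sh up pS ip kp xi xk; apply/eqP; rewrite -(nth_uniq set0 ip kp up).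
by apply/eqP; apply: comps_eq sh (pS _ (mem_nth _ ip)) (pS _ (mem_nth _ kp)) xi xk.
Qed.

Definition sole_exit S U h a b :=
  forall x y, x \in U -> y \in S -> y \notin U -> h x y -> x = a /\ y = b.

Section Bridge.
Variables (S U : {set T}) (h : rel T) (u v a b : T).
Hypotheses (sh : symmetric h) (sUS : U \subset S) (uU : u \in U) (vS : v \in S)
  (vNU : v \notin U) (aU : a \in U) (bS : b \in S) (hab : h a b)
  (exit_ab : sole_exit S U h a b).

Lemma exits_through_bridge_l r : subrel r h -> exits_through (restrict S r) U a a.
Proof.
move=> rh y z yU zNU /and3P[_ zS ryz].
by have [-> _] := exit_ab yU zS zNU (rh _ _ ryz); rewrite eqxx.
Qed.

Lemma exits_through_bridge_r r : subrel r h ->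
  exits_through (restrict S r) (S :\: U) b b.
Proof.
move=> rh y z /setDP[yS yNU] zNV /and3P[_ zS ryz].
have zU : z \in U by apply: contraR zNV => zNU; rewrite inE zNU.
by have [_ ->] := exit_ab zU yS yNU (etrans (sh z y) (rh _ _ ryz)); rewrite eqxx.
Qed.

Lemma twoEC_bridge_sub C x : C \subset S -> twoEC C h -> x \in C -> x \in U ->
  C \subset U.
Proof.
move=> sCS tC xC xU; apply/subsetP => y yC; apply: contraT => yNU.
have cxy := connectedb_connect (connectedb_delEdge a b sh tC) xC yC.
have [p [q [pU qNU /and3P[_ qC /andP[hpq npq]]]]] := exit_edge cxy xU yNU.
have [ep eq] := exit_ab pU (subsetP sCS q qC) qNU hpq.
by rewrite ep eq !eqxx in npq.
Qed.

Lemma twoEC_bridge_subD C x : C \subset S -> twoEC C h -> x \in C -> x \notin U ->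
  C \subset S :\: U.
Proof.
move=> sCS tC xC xNU; apply/subsetP => y yC; rewrite inE (subsetP sCS y yC) andbT.
by apply: contra xNU => yU; apply: subsetP (twoEC_bridge_sub sCS tC yC yU) x xC.
Qed.

Lemma comps_bridge C :
  (C \in comps S h) = (C \in comps U h) || (C \in comps (S :\: U) h).
Proof.
have sDS : S :\: U \subset S := subsetDl S U.
apply/idP/orP => [/compsP[sCS nC tC maxC] | ].
  have [x xC] := set0Pn _ nC.
  have [xU | xNU] := boolP (x \in U); [left | right]; apply/compsP; split=> //.
  - exact: twoEC_bridge_sub sCS tC xC xU.
  - by move=> C' pC' sC'; apply: maxC pC' (subset_trans sC' sUS).
  - exact: twoEC_bridge_subD sCS tC xC xNU.
  - by move=> C' pC' sC'; apply: maxC pC' (subset_trans sC' sDS).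
case=> /compsP[sC nC tC maxC]; have [x xC] := set0Pn _ nC;
  apply/compsP; split=> //; rewrite ?(subset_trans sC) // => C' pC' sC';
  apply/negP => tC'; have xC' := subsetP (proper_sub pC') x xC.
  by case/negP: (maxC C' pC' (twoEC_bridge_sub sC' tC' xC' (subsetP sC x xC))).
have xNU : x \notin U by have /setDP[] := subsetP sC x xC.
by case/negP: (maxC C' pC' (twoEC_bridge_subD sC' tC' xC' xNU)).
Qed.

Lemma mult_bridge C D : C \subset U -> D \subset S :\: U ->
  mult S h C D = (a \in C) && (b \in D).
Proof.
move=> /subsetP sCU /subsetP sDV.
have [/andP[aC bD] | nab] := boolP ((a \in C) && (b \in D)).
  rewrite /= /mult -(cards1 (a, b)); apply: eq_card => -[x y]; rewrite !inE /=.
  apply/idP/eqP => [/and5P[xC yD _ yS hxy] | [-> ->]].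
    by have /setDP[_ yNU] := sDV y yD; have [-> ->] := exit_ab (sCU x xC) yS yNU hxy.
  by rewrite aC bD (subsetP sUS a aU) bS hab.
apply/eqP; rewrite cards_eq0; apply: contraNT nab => /set0Pn[[x y]].
rewrite inE /= => /and5P[xC yD _ yS hxy]; have /setDP[_ yNU] := sDV y yD.
by have [<- <-] := exit_ab (sCU x xC) yS yNU hxy; rewrite xC yD.
Qed.

Lemma two_terminal_bridge_l : two_terminal S h u v -> two_terminal U h u a.
Proof.
move=> tt c d x xU; have exU := exits_through_bridge_l (@delEdge_sub h c d).
case/orP: (tt c d x (subsetP sUS x xU)) =>
  /(connect_exits_through exU xU)/or3P[] cx; rewrite ?cx ?orbT //.
by move/connect_restrict_in: cx => /(_ xU); rewrite (negbTE vNU).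
Qed.

Lemma two_terminal_bridge_r : two_terminal S h u v -> two_terminal (S :\: U) h b v.
Proof.
move=> tt c d x xV; have exV := exits_through_bridge_r (@delEdge_sub h c d).
case/orP: (tt c d x (subsetP (subsetDl S U) x xV)) =>
  /(connect_exits_through exV xV)/or3P[] cx; rewrite ?cx ?orbT //.
by move/connect_restrict_in: cx => /(_ xV)/setDP[_]; rewrite uU.
Qed.

Lemma connect_bridge_l : connect (restrict S h) u v -> connect (restrict U h) u a.
Proof.
move/(connect_exits_through (exits_through_bridge_l (fun _ _ => id)) uU)/or3P.
by case=> // /connect_restrict_in/(_ uU); rewrite (negbTE vNU).
Qed.

Lemma connect_bridge_r : connect (restrict S h) u v -> connect (restrict (S :\: U) h) b v.
Proof.
have vV : v \in S :\: U by rewrite inE vNU vS.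
rewrite (sym_connect_sym (restrict_sym S sh) u) (sym_connect_sym (restrict_sym _ sh) b).
move/(connect_exits_through (exits_through_bridge_r (fun _ _ => id)) vV)/or3P.
by case=> // /connect_restrict_in/(_ vV)/setDP[_]; rewrite uU.
Qed.

Lemma typeB_bridge pU pV : comp_path U h u a pU -> comp_path (S :\: U) h b v pV ->
  typeB S h u v.
Proof.
move=> [[upU szU EU uU0 aL] mU] [[upV szV EV bV0 vL] mV].
have pUc : {subset pU <= comps U h} by move=> C; rewrite EU.
have pVc : {subset pV <= comps (S :\: U) h} by move=> C; rewrite EV.
have a_nth i : i < size pU -> (a \in nth set0 pU i) = (i == (size pU).-1).
  move=> ip; apply/idP/eqP => [ai | ->]; last by rewrite nth_last.
  by apply: nth_comps_inj sh upU pUc ip _ ai _; rewrite ?nth_last // ltn_predL.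
have b_nth k : k < size pV -> (b \in nth set0 pV k) = (k == 0).
  move=> kp; apply/idP/eqP => [bk | -> //].
  exact: nth_comps_inj sh upV pVc kp szV bk bV0.
exists (pU ++ pV); split; last first.
  apply: mult_chain_cat => [||i k ip kp].
  - exact: mult_chain_sub pUc sUS mU.
  - exact: mult_chain_sub pVc (subsetDl S U) mV.
  - rewrite mult_bridge ?a_nth ?b_nth //.
      by rewrite (comps_sub (pUc _ _)) ?mem_nth.
    by rewrite (comps_sub (pVc _ _)) ?mem_nth.
split.
- rewrite cat_uniq upU upV andbT; apply/hasPn => C /pVc/compsP[sCV /set0Pn[x xC] _ _].
  apply/negP => /pUc/comps_sub/subsetP/(_ x xC) xU.
  by have /setDP[_] := subsetP sCV x xC; rewrite xU.
- by rewrite size_cat (leq_add szU szV).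
- by move=> C; rewrite comps_bridge mem_cat EU EV.
- by rewrite nth_cat szU last_cat; case: (pV) szV vL.
Qed.
End Bridge.

Lemma separating_edge S h u v c d : symmetric h -> u \in S ->
  connect (restrict S h) u v -> ~~ connect (restrict S (delEdge h c d)) u v ->
  exists a b, [/\ a \in reach S (delEdge h c d) u, b \in S,
    b \notin reach S (delEdge h c d) u, h a b &
    sole_exit S (reach S (delEdge h c d) u) h a b].
Proof.
move=> sh uS cuv ncd; set U := reach S (delEdge h c d) u.
have vNU : v \notin U by rewrite inE negb_and ncd orbT.
have crossing x y : x \in U -> y \in S -> y \notin U -> h x y ->
    ((x == c) && (y == d)) || ((x == d) && (y == c)).
  move=> xU yS yNU hxy; apply: contraR yNU => nxy.
  by apply: reach_closed xU yS _; rewrite /delEdge /= hxy.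
have [a [b [aU bNU /and3P[_ bS hab]]]] := exit_edge cuv (reach_refl _ uS) vNU.
exists a, b; split=> // x y xU yS yNU hxy.
move: (crossing a b aU bS bNU hab) (crossing x y xU yS yNU hxy).
case/orP=> /andP[/eqP ea /eqP eb]; case/orP=> /andP[/eqP ex /eqP ey]; subst=> //;
  by rewrite xU in bNU.
Qed.

Theorem two_terminal_typeABC S h u v : symmetric h -> u \in S -> v \in S ->
  two_terminal S h u v -> typeABC S h u v.
Proof.
move=> sh; have [n] := ubnP #|S|; elim: n S u v => // n IH S u v ltSn uS vS tt.
have [cuv | ncuv] := boolP (connect (restrict S h) u v); last first.
  by right; right; apply: typeC_of_disconnected.
have [/forallP all_cd | ] :=
  boolP [forall c, forall d, connect (restrict S (delEdge h c d)) u v].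
  left; exists S; split=> //; apply: comps_of_twoEC; last by apply/set0Pn; exists u.
  by apply: (twoEC_of_two_terminal sh tt) => c d; apply: (forallP (all_cd c)).
rewrite negb_forall => /existsP[c]; rewrite negb_forall => /existsP[d ncd].
have [a [b [aU bS bNU hab exit_ab]]] := separating_edge sh uS cuv ncd.
set U := reach S (delEdge h c d) u in aU bNU exit_ab.
have uU : u \in U := reach_refl _ uS.
have vNU : v \notin U by rewrite inE negb_and ncd orbT.
have sUS : U \subset S := reach_sub _ _ _.
have leSn : #|S| <= n by [].
have ltU : #|U| < n.
  by apply: leq_trans _ leSn; apply: proper_card; apply/properP; split=> //; exists v.
have ltV : #|S :\: U| < n.
  apply: leq_trans _ leSn; apply: proper_card; apply/properP.
  by split; [apply: subsetDl | exists u; rewrite // inE uU].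
have [pU pathU] := comp_path_of_typeABC sh (connect_bridge_l uU vNU exit_ab cuv)
  (IH U u a ltU uU aU (two_terminal_bridge_l sUS vNU exit_ab tt)).
have bV : b \in S :\: U by rewrite inE bNU bS.
have vV : v \in S :\: U by rewrite inE vNU vS.
have [pV pathV] := comp_path_of_typeABC sh (connect_bridge_r sh uU vS vNU exit_ab cuv)
  (IH _ b v ltV bV vV (two_terminal_bridge_r sh uU exit_ab tt)).
right; left; exact: (typeB_bridge sh sUS aU bS hab exit_ab pathU pathV).
Qed.

(** * The two sides of a 2-vertex-cut *)

Lemma two_terminal_of_exits g hH S u v w : spanning_2EC_subgraph g hH ->
  exits_through g S u v -> w \notin S -> two_terminal S hH u v.
Proof.
move=> [hs [hg tH]] ex wNS c d x xS.
have ex' : exits_through (restrict setT (delEdge hH c d)) S u v.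
  by apply: exits_through_sub ex => y z /delEdge_sub/hg.
have cxw := connectedb_connect (connectedb_delEdge c d hs tH) (in_setT x) (in_setT w).
case/or3P: (connect_exits_through ex' xS cxw) => [cw | -> | ->]; rewrite ?orbT //.
by move/connect_restrict_in: cw => /(_ xS); rewrite (negbTE wNS).
Qed.

Lemma connect_delEdge_of_disconnected g hH S1 S2 u v c d :
  spanning_2EC_subgraph g hH -> S1 :|: S2 = setT -> u \in S1 -> v \in S1 ->
  u \in S2 -> v \in S2 -> exits_through g S2 u v ->
  ~~ connect (restrict S1 hH) u v -> connect (restrict S2 (delEdge hH c d)) u v.
Proof.
(* W := S2 + the u-component R of (S1, hH) is left by hH - cd only at v, so
   it contains a u-v path of hH - cd, which in turn leaves S2 only at u. *)
move=> [hs [hg tH]] cover uS1 vS1 uS2 vS2 ex2 nuv.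
set r := delEdge hH c d; set R := reach S1 hH u; set W := S2 :|: R.
have vNR : v \notin R by rewrite inE negb_and nuv orbT.
have uR : u \in R := reach_refl _ uS1.
have ex2' : exits_through r S2 u v by move=> y z yS2 zNS2 /delEdge_sub/hg; apply: ex2.
have zS1 z : z \notin S2 -> z \in S1.
  by move=> zNS2; move: (in_setT z); rewrite -cover inE (negbTE zNS2) orbF.
have exW : exits_through (restrict setT r) W v v.
  move=> y z /setUP[yS2 | yR] + /and3P[_ _ ryz];
  rewrite inE negb_or => /andP[zNS2 zNR].
    have /orP[/eqP yu | ->] // := ex2' y z yS2 zNS2 ryz.
    by rewrite yu in ryz; rewrite (reach_closed uR (zS1 z zNS2) (delEdge_sub ryz)) in zNR.
  by rewrite (reach_closed yR (zS1 z zNS2) (delEdge_sub ryz)) in zNR.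
have cuvW : connect (restrict W r) u v.
  have cuv := connectedb_connect (connectedb_delEdge c d hs tH) (in_setT u) (in_setT v).
  have uW : u \in W by rewrite inE uS2.
  by have := connect_exits_through exW uW cuv; rewrite !orbb.
have exS2 : exits_through (restrict W r) S2 u u.
  move=> y z yS2 zNS2 /and3P[_ zW ryz].
  have zR : z \in R by move: zW; rewrite inE (negbTE zNS2).
  have /orP[-> // | /eqP yv] := ex2' y z yS2 zNS2 ryz.
  case/negP: vNR; rewrite -yv; apply: reach_closed zR _ _; first by rewrite yv.
  by rewrite hs; apply: delEdge_sub ryz.
rewrite (sym_connect_sym (restrict_sym _ (delEdge_sym c d hs))).
rewrite (sym_connect_sym (restrict_sym _ (delEdge_sym c d hs))) in cuvW.
by have := connect_exits_through exS2 vS2 cuvW; rewrite !orbb.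
Qed.

Lemma edge_across g S A x y w z : A \subset S -> y \in S -> y \notin A ->
  w \in A -> w != x -> z \notin S -> z != x -> connectedb (setT :\ x) g ->
  exits_through g S x y -> exists p q, [/\ p \in A, q \in S, q \notin A & g p q].
Proof.
move=> sAS yS yNA wA wx zNS zx cgx ex.
have wX : w \in setT :\ x by rewrite !inE wx.
have zX : z \in setT :\ x by rewrite !inE zx.
have zNA : z \notin A by apply: contra zNS; apply: subsetP.
have [p [q [pA qNA /and3P[pX _ gpq]]]] := exit_edge (connectedb_connect cgx wX zX) wA zNA.
exists p, q; split=> //; apply: contraT => qNS.
have /orP[/eqP px | /eqP py] := ex p q (subsetP sAS p pA) qNS gpq.
  by move: pX; rewrite px !inE eqxx.
by rewrite -py pA in yNA.
Qed.

Lemma typeB_addEdge S h u v C a b : symmetric h ->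
  C \in comps S h -> S :\: C \in comps S h ->
  (forall y z, y \in C -> z \in S -> h y z -> z \in C) ->
  u \in C -> v \in S :\: C -> a \in C -> b \in S :\: C -> typeB S (addEdge h a b) u v.
Proof.
move=> sh cC cD clC uC vD aC /[dup] bD /setDP[bS bNC].
have exit_ab : sole_exit S C (addEdge h a b) a b.
  move=> x y xC yS yNC /or3P[hxy | /andP[/eqP-> /eqP->] // | /andP[/eqP xb _]].
    by rewrite (clC x y xC yS hxy) in yNC.
  by rewrite -xb xC in bNC.
have path1 D x y : D \in comps S h -> x \in D -> y \in D ->
    comp_path D (addEdge h a b) x y [:: D].
  move=> cD' xD yD; apply: (comp_path1 _ xD yD).
  apply: comps_of_twoEC; last by apply/set0Pn; exists x.
  exact: twoEC_sub sh (@addEdge_sub h a b) (comps_twoEC cD').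
have hab : addEdge h a b a b by rewrite /addEdge /= !eqxx orbT.
exact: (typeB_bridge (addEdge_sym a b sh) (comps_sub cC) aC bS hab exit_ab
  (path1 C u a cC uC aC) (path1 _ b v cD bD vD)).
Qed.

Lemma part2_of_exits g hH S u v w z : symmetric g -> spanning_2EC_subgraph g hH ->
  connectedb (setT :\ u) g -> connectedb (setT :\ v) g ->
  w \in S -> w != u -> w != v -> z \notin S -> exits_through g S u v -> part2 g hH S u v.
Proof.
move=> gs [hs [hg tH]] cgu cgv wS wu wv zNS ex tC.
have [C [cC cD uC vD] clC] := typeC_split hs tC.
have sCS := comps_sub cC; have [vS vNC] := setDP vD; have uS := subsetP sCS u uC.
have [zu zv] : z != u /\ z != v by split; apply: contraNneq zNS => ->.
have [a [b [aC bD gab]]] : exists a b, [/\ a \in C, b \in S :\: C & g a b].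
  have [wC | wNC] := boolP (w \in C).
    have [a [b [aC bS bNC gab]]] := edge_across sCS vS vNC wC wu zNS zu cgu ex.
    by exists a, b; rewrite inE bNC bS.
  have ex' : exits_through g S v u by move=> y y' yS y'NS /(ex y y' yS y'NS); rewrite orbC.
  have uND : u \notin S :\: C by rewrite inE uC.
  have wD : w \in S :\: C by rewrite inE wNC wS.
  have [b [a [bD aS aND gba]]] := edge_across (subsetDl S C) uS uND wD wv zNS zv cgv ex'.
  by exists a, b; rewrite gs gba; move: aND; rewrite inE aS andbT negbK.
have tB := typeB_addEdge hs cC cD clC uC vD aC bD.
split; first by exists a, b; rewrite (subsetP sCS a aC) (subsetP (subsetDl S C) b bD).
exists (addEdge hH a b); split; last by right.
split; first exact: addEdge_sym.
split; last exact: twoEC_sub hs (@addEdge_sub hH a b) tH.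
by move=> x y /or3P[/hg // | /andP[/eqP-> /eqP->] // | /andP[/eqP-> /eqP->]]; rewrite gs.
Qed.

Definition separation g S1 S2 u v :=
  [/\ S1 :|: S2 = setT, S1 :&: S2 = [set u; v],
      exits_through g S1 u v & exits_through g S2 u v].

Lemma separation_sym g S1 S2 u v : separation g S1 S2 u v -> separation g S2 S1 u v.
Proof. by case=> cover cap ex1 ex2; split=> //; [rewrite setUC | rewrite setIC]. Qed.

Lemma separation_of_partition g u v V1 V2 : symmetric g ->
  V1 :|: V2 = ~: [set u; v] -> V1 :&: V2 = set0 ->
  (forall x y, x \in V1 -> y \in V2 -> ~~ g x y) ->
  separation g (V1 :|: [set u; v]) (V2 :|: [set u; v]) u v.
Proof.
move=> gs cover disj noE.
have inV12 x : x \notin [set u; v] -> (x \in V1) || (x \in V2).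
  by move=> xNuv; rewrite -in_setU cover in_setC.
have exits V V' : V :|: V' = V1 :|: V2 -> (forall x y, x \in V -> y \in V' -> ~~ g x y) ->
    exits_through g (V :|: [set u; v]) u v.
  move=> VV' noVV' x y xS; rewrite !inE !negb_or => /and3P[yNV yu yv] gxy.
  have yV' : y \in V'.
    by have := inV12 y; rewrite -in_setU -VV' !inE (negbTE yNV) (negbTE yu) (negbTE yv); apply.
  move: xS; rewrite !inE => /or3P[xV | -> // | ->]; last by rewrite orbT.
  by rewrite (negbTE (noVV' x y xV yV')) in gxy.
split.
- by rewrite setUACA setUid cover setUC setUCr.
- by rewrite -setUIl disj set0U.
- exact: exits.
- apply: exits => [|x y xV2 yV1]; first exact: setUC.
  by rewrite gs noE.
Qed.

Section Separation.
Variables (g hH : rel T) (S1 S2 : {set T}) (u v w1 w2 : T).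
Hypotheses (gs : symmetric g) (span : spanning_2EC_subgraph g hH)
  (conn : forall x, connectedb (setT :\ x) g) (sep : separation g S1 S2 u v)
  (w1NS2 : w1 \notin S2) (w2NS1 : w2 \notin S1).

Lemma separation_mem : [/\ u \in S1, v \in S1, u \in S2 & v \in S2].
Proof.
case: sep => _ cap _ _; have := set21 u v; have := set22 u v.
by rewrite -cap !inE => /andP[-> ->] /andP[-> ->].
Qed.

Lemma typeABC_separation : typeABC S1 hH u v.
Proof.
have [uS1 vS1 _ _] := separation_mem; case: sep => _ _ ex1 _.
have [hs _] := span.
exact: two_terminal_typeABC hs uS1 vS1 (two_terminal_of_exits span ex1 w2NS1).
Qed.

Lemma typeA_separation_of_typeC : typeC S1 hH u v -> typeA S2 hH u v.
Proof.
have [uS1 vS1 uS2 vS2] := separation_mem; case: sep => cover _ _ ex2.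
have [hs _] := span; move/(typeC_disconnected hs) => nuv.
exists S2; split=> //; apply: comps_of_twoEC; last by apply/set0Pn; exists u.
apply: (twoEC_of_two_terminal hs (two_terminal_of_exits span ex2 w1NS2)) => c d.
exact: connect_delEdge_of_disconnected span cover uS1 vS1 uS2 vS2 ex2 nuv.
Qed.

Lemma part2_separation : part2 g hH S1 u v.
Proof.
have [_ _ uS2 vS2] := separation_mem; case: sep => cover _ ex1 _.
have w1S1 : w1 \in S1 by move: (in_setT w1); rewrite -cover inE (negbTE w1NS2) orbF.
have [w1u w1v] : w1 != u /\ w1 != v by split; apply: contraNneq w1NS2 => ->.
exact: part2_of_exits gs span (conn u) (conn v) w1S1 w1u w1v w2NS1 ex1.
Qed.
End Separation.
End Graphs.

Theorem lemma11 (T : finType) (g : rel T) (u v : T) (V1 V2 : {set T})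
    (hH : rel T) :
  simple_graph g ->
  two_vertex_connected g ->
  no_irrelevant_edges g ->
  two_vertex_cut g u v ->
  V1 :|: V2 = ~: [set u; v] ->
  V1 :&: V2 = set0 ->
  V1 != set0 -> V2 != set0 ->
  (forall x y, x \in V1 -> y \in V2 -> ~~ g x y) ->
  spanning_2EC_subgraph g hH ->
  let S1 := V1 :|: [set u; v] in
  let S2 := V2 :|: [set u; v] in
  ([/\ typeABC S1 hH u v, typeABC S2 hH u v,
       typeC S1 hH u v -> typeA S2 hH u v &
       typeC S2 hH u v -> typeA S1 hH u v])
  /\ part2 g hH S1 u v /\ part2 g hH S2 u v.
Proof.
move=> [gs _] [_ [_ conn]] _ _ cover disj /set0Pn[w1 w1V1] /set0Pn[w2 w2V2] noE span S1 S2.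
have sep : separation g S1 S2 u v := separation_of_partition gs cover disj noE.
have notin_side x (V V' : {set T}) :
    x \in V -> V :&: V' = set0 -> V \subset ~: [set u; v] -> x \notin V' :|: [set u; v].
  move=> xV VV' /subsetP/(_ x xV); rewrite in_setU in_setC => /negbTE->; rewrite orbF.
  by apply/negP => xV'; move/setP/(_ x): VV'; rewrite !inE xV xV'.
have w1NS2 : w1 \notin S2 by apply: notin_side w1V1 disj _; rewrite -cover subsetUl.
have disj' : V2 :&: V1 = set0 by rewrite setIC.
have w2NS1 : w2 \notin S1 by apply: notin_side w2V2 disj' _; rewrite -cover subsetUr.
have sep' := separation_sym sep.
split; [split | split].
- exact: typeABC_separation span sep w2NS1.
- exact: typeABC_separation span sep' w1NS2.
- exact: typeA_separation_of_typeC span sep w1NS2.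
- exact: typeA_separation_of_typeC span sep' w2NS1.
- exact: part2_separation gs span conn sep w1NS2 w2NS1.
- exact: part2_separation gs span conn sep' w2NS1 w1NS2.
Qed.
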